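(* Let $a,\delta,\beta,h_1,h_2$ be positive real parameters and consider the planar system of ordinary differential equations, defined for $x>0$, $$\frac{dx}{dt} = x(1-x) - \frac{x}{a+x^2}\,y - h_1 x,\qquad \frac{dy}{dt} = \delta y\left(1-\beta\frac{y}{x}\right) - h_2 y.$$ If $h_1\in\,]0,1[$ and $\delta\in\,]0,h_2[$, then the point $(1-h_1,0)$ is an equilibrium of this system and it is a sink.
   Context: This system is a rescaled prey-predator model with Leslie--Gower and simplified Holling IV functional response and constant-effort harvesting; $x$ denotes the prey and $y$ the predator population. An equilibrium point is called a sink if all eigenvalues of the Jacobian matrix of the vector field evaluated at that point have strictly negative real parts. *)

From HB Require Import structures.
From mathcomp Require Import all_boot all_order all_algebra.
From mathcomp Require Import complex.
From mathcomp Require Import all_classical all_reals all_analysis.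
Set Implicit Arguments. Unset Strict Implicit. Unset Printing Implicit Defensive.
Import Order.TTheory GRing.Theory Num.Theory.
Local Open Scope ring_scope.

Section Model.
Variable R : realType.

Definition f1 (a h1 : R) (x y : R) : R :=
  x * (1 - x) - x / (a + x ^+ 2) * y - h1 * x.

Definition f2 (delta beta h2 : R) (x y : R) : R :=
  delta * y * (1 - beta * y / x) - h2 * y.

Definition jacobian2 (f g : R -> R -> R) (x0 y0 : R) : 'M[R]_2 :=
  \matrix_(i < 2, j < 2)
    let h := if (i : nat) == 0%N then f else g in
    if (j : nat) == 0%N then derive1 (fun x => h x y0) x0
    else derive1 (fun y => h x0 y) y0.

Definition is_sink_matrix (J : 'M[R]_2) : Prop :=
  forall lam : R[i], eigenvalue (map_mx (fun r : R => r%:C%C) J) lam ->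
    complex.Re lam < 0.

Definition is_equilibrium (f g : R -> R -> R) (x0 y0 : R) : Prop :=
  f x0 y0 = 0 /\ g x0 y0 = 0.

Definition is_sink (f g : R -> R -> R) (x0 y0 : R) : Prop :=
  is_sink_matrix (jacobian2 f g x0 y0).
End Model.

From HB Require Import structures.
From mathcomp Require Import all_boot all_order all_algebra.
From mathcomp Require Import complex.
From mathcomp Require Import all_classical all_reals all_analysis.
From mathcomp Require Import lra ring.
Import Order.TTheory GRing.Theory Num.Theory.
Local Open Scope ring_scope.

(* The Jacobian at (1 - h1, 0) is upper triangular, because the predator
   equation vanishes identically on the axis y = 0; its eigenvalues are thus
   the diagonal entries -(1 - h1) and delta - h2, both negative. *)

Lemma char_poly_trmx (R : comNzRingType) n (A : 'M[R]_n) :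
  char_poly A^T = char_poly A.
Proof.
rewrite /char_poly -det_tr; congr (\det _); apply/matrixP => i j.
by rewrite !mxE eq_sym.
Qed.

Lemma eigenvalue_trmx (F : fieldType) n (A : 'M[F]_n) lam :
  eigenvalue A^T lam = eigenvalue A lam.
Proof. by rewrite !eigenvalue_root_char char_poly_trmx. Qed.

Lemma eigenvalue_trig (F : fieldType) n (A : 'M[F]_n) lam :
  is_trig_mx A -> eigenvalue A lam -> exists i, lam = A i i.
Proof.
move=> Atrig; rewrite eigenvalue_root_char char_poly_trig //.
rewrite -(big_map (fun i => A i i) xpredT (fun x => 'X - x%:P)).
by rewrite root_prod_XsubC => /mapP [i _ ->]; exists i.
Qed.

Lemma is_sink_matrix_upper_trig (R : realType) (J : 'M[R]_2) :
  J 1 0 = 0 -> (forall i, J i i < 0) -> is_sink_matrix J.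
Proof.
move=> J10 Jneg lam; rewrite -eigenvalue_trmx => /eigenvalue_trig [].
  apply/is_trig_mxP => i j; rewrite !mxE.
  case: i => [[|[|//]] i0]; case: j => [[|[|//]] j1] //= _.
  have -> : Ordinal i0 = 0 :> 'I_2 by apply: val_inj.
  have -> : Ordinal j1 = 1 :> 'I_2 by apply: val_inj.
  by rewrite J10.
by move=> i ->; rewrite !mxE /=; apply: Jneg.
Qed.

Lemma is_sink_upper_trig (R : realType) (f g : R -> R -> R) x0 y0 :
  derive1 (fun x => g x y0) x0 = 0 ->
  derive1 (fun x => f x y0) x0 < 0 -> derive1 (fun y => g x0 y) y0 < 0 ->
  is_sink f g x0 y0.
Proof.
move=> gx0 fx_neg gy_neg; apply: is_sink_matrix_upper_trig; first by rewrite !mxE.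
by move=> [[|[|//]] ?]; rewrite !mxE.
Qed.

Section PreyPredator.
Variables (R : realType) (a delta beta h1 h2 : R).

Lemma f1_x_axis x : f1 a h1 x 0 = x * (1 - x) - h1 * x.
Proof. by rewrite /f1 mulr0 subr0. Qed.

Lemma f2_x_axis x : f2 delta beta h2 x 0 = 0.
Proof. by rewrite /f2 !mulr0 !mul0r subrr. Qed.

Lemma dx_f1_x_axis x : derive1 (fun x => f1 a h1 x 0) x = 1 - h1 - 2 * x.
Proof.
under eq_fun do rewrite f1_x_axis.
rewrite derive1E derive_val /GRing.scale /=; lra.
Qed.

Lemma dx_f2_x_axis x : derive1 (fun x => f2 delta beta h2 x 0) x = 0.
Proof. by under eq_fun do rewrite f2_x_axis; rewrite derive1_cst. Qed.

Lemma dy_f2_x_axis x : derive1 (fun y => f2 delta beta h2 x y) 0 = delta - h2.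
Proof. rewrite /f2 derive1E derive_val /GRing.scale /= !mulr0 !mul0r; lra. Qed.

End PreyPredator.

Theorem theorem1 (R : realType) (a delta beta h1 h2 : R) :
  0 < a -> 0 < delta -> 0 < beta -> 0 < h1 -> 0 < h2 ->
  h1 < 1 -> delta < h2 ->
  is_equilibrium (f1 a h1) (f2 delta beta h2) (1 - h1) 0 /\
  is_sink (f1 a h1) (f2 delta beta h2) (1 - h1) 0.
Proof.
move=> _ _ _ _ _ h1_lt1 delta_lt_h2; split.
  by split; rewrite ?f1_x_axis ?f2_x_axis //; ring.
apply: is_sink_upper_trig.
- exact: dx_f2_x_axis.
- rewrite dx_f1_x_axis; lra.
- rewrite dy_f2_x_axis; lra.
Qed.
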